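(* Let $P(z^1,\dots,z^d)$ be a polynomial in $d$ variables with real coefficients. The $N\times N$ matrix $P(W^{(1)},\dots,W^{(d)})$ has full rank $N$ if and only if the constant term of $P$ is nonzero.
   Context: For $k=1,\dots,d$, $a_k=x^k_0<\dots<x^k_{n_k}=b_k$ is a partition of $[a_k,b_k]$ with $n_k\ge1$, $l^k_j$ its Lagrange basis polynomials, and $\hat Z^{(k)}$ the $(n_k+1)\times(n_k+1)$ matrix with $\hat Z^{(k)}_{j,i}=(l^k_i)'(x^k_j)$. $N=(n_1+1)\cdots(n_d+1)$ and $W^{(\alpha)}=I_{n_1+1}\otimes\dots\otimes I_{n_{\alpha-1}+1}\otimes\hat Z^{(\alpha)}\otimes I_{n_{\alpha+1}+1}\otimes\dots\otimes I_{n_d+1}$ (these matrices pairwise commute, so $P(W^{(1)},\dots,W^{(d)})$ is well defined, the constant term being multiplied by the $N\times N$ identity). *)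

From HB Require Import structures.
From mathcomp Require Import all_boot all_order all_algebra.
Set Implicit Arguments. Unset Strict Implicit. Unset Printing Implicit Defensive.
Import Order.TTheory GRing.Theory Num.Theory.
Local Open Scope ring_scope.

(* Decomposition of a row-major index of 'I_(m*n) into a pair (i, j),
   i.e. the index i*n + j corresponds to (i, j); inverse of mxvec_index. *)
Definition kidx (m n : nat) (k : 'I_(m * n)) : 'I_m * 'I_n :=
  enum_val (cast_ord (esym (mxvec_cast m n)) k).

Lemma kidx_mxvec_index (m n : nat) (i : 'I_m) (j : 'I_n) :
  kidx (mxvec_index i j) = (i, j).
Proof. by rewrite /kidx /mxvec_index cast_ordK enum_rankK. Qed.

Definition kron (R : pzRingType) m1 n1 m2 n2
  (A : 'M[R]_(m1, n1)) (B : 'M[R]_(m2, n2)) : 'M[R]_(m1 * m2, n1 * n2) :=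
  \matrix_(i, j) (A (kidx i).1 (kidx j).1 * B (kidx i).2 (kidx j).2).

Definition lagr (R : fieldType) (n : nat) (x : nat -> R) (i : nat) : {poly R} :=
  \prod_(m < n.+1 | (m : nat) != i) (('X - (x m)%:P) * ((x i - x m)^-1)%:P).

Definition Zhat (R : fieldType) (n : nat) (x : nat -> R) : 'M[R]_(n.+1) :=
  \matrix_(j, i) ((lagr n x i)^`()).[x j].

Fixpoint Ndim (n : nat -> nat) (d : nat) : nat :=
  if d is d'.+1 then (Ndim n d' * (n d').+1)%N else 1%N.

(* W^(alpha) = I (x) ... (x) I (x) Zhat^(alpha) (x) I (x) ... (x) I  (d factors,
   alpha is 0-based: alpha < d; x k are the nodes of the k-th partition,
   n k its number of subintervals). *)
Fixpoint Wmat (R : fieldType) (n : nat -> nat) (x : nat -> nat -> R)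
  (d alpha : nat) : 'M[R]_(Ndim n d) :=
  if d is d'.+1 then
    if alpha == d' then kron (1%:M : 'M[R]_(Ndim n d')) (Zhat (n d') (x d'))
    else kron (Wmat n x d' alpha) (1%:M : 'M[R]_((n d').+1))
  else 1%:M.

(* A real polynomial in d variables, given by its coefficients c e on
   exponent vectors e : 'I_d -> {0..D} (every polynomial is of this form for
   D large enough), evaluated at the commuting matrices W^(1..d). *)
Definition polyW (R : fieldType) (n : nat -> nat) (x : nat -> nat -> R)
  (d D : nat) (c : {ffun 'I_d -> 'I_D.+1} -> R) : 'M[R]_(Ndim n d) :=
  \sum_(e : {ffun 'I_d -> 'I_D.+1})
     c e *: \prod_(k < d) (Wmat n x d k) ^+ (e k).

Definition const_exp (d D : nat) : {ffun 'I_d -> 'I_D.+1} := [ffun _ => ord0].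

(* Each Zhat^(k) is the matrix of differentiation of polynomials of degree
   at most n_k, written in the coordinates given by their values at the
   nodes (Lagrange interpolation); hence Zhat^(k) ^+ (n_k + 1) = 0.  The
   W^(alpha), Kronecker products of one Zhat^(k) with identities, are thus
   pairwise commuting nilpotent matrices, so P(W^(1), ..., W^(d)) is
   P(0) I + M with M nilpotent.  Such a matrix is invertible iff P(0) != 0:
   if P(0) != 0 a finite geometric series inverts it, and a nilpotent
   matrix of positive size is singular. *)

From HB Require Import structures.
From mathcomp Require Import all_boot all_order all_algebra.
Set Implicit Arguments. Unset Strict Implicit. Unset Printing Implicit Defensive.
Import Order.TTheory GRing.Theory Num.Theory.
Local Open Scope ring_scope.

Section Nilpotent.
Variable T : pzRingType.

Definition nilpotent (a : T) := exists m, a ^+ m = 0.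

Lemma nilpotentX a k : nilpotent a -> (0 < k)%N -> nilpotent (a ^+ k).
Proof.
move=> [m am] k_gt0; exists m.
by rewrite -exprM mulnC exprM am expr0n; case: k k_gt0.
Qed.

Lemma nilpotentMl a b : GRing.comm a b -> nilpotent a -> nilpotent (a * b).
Proof. by move=> ab [m am]; exists m; rewrite exprMn_comm // am mul0r. Qed.

Lemma nilpotentMr a b : GRing.comm a b -> nilpotent b -> nilpotent (a * b).
Proof. by move=> ab [m bm]; exists m; rewrite exprMn_comm // bm mulr0. Qed.

Lemma nilpotentD a b :
  GRing.comm a b -> nilpotent a -> nilpotent b -> nilpotent (a + b).
Proof.
move=> ab [m am] [l bl]; exists (m + l)%N; rewrite exprDn_comm //.
have expr_eq0_ge x k j : x ^+ k = 0 -> (k <= j)%N -> x ^+ j = 0 :> T.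
  by move=> xk /subnKC <-; rewrite exprD xk mul0r.
apply: big1 => i _; have [li|il] := leqP l i.
  by rewrite (expr_eq0_ge b l i) // mulr0 mul0rn.
by rewrite (expr_eq0_ge a m) ?mul0r ?mul0rn // -addnBA ?leq_addr // ltnW.
Qed.

Lemma nilpotent_sum (I : finType) (P : pred I) (F : I -> T) :
    (forall i j, P i -> P j -> GRing.comm (F i) (F j)) ->
    (forall i, P i -> nilpotent (F i)) ->
  nilpotent (\sum_(i | P i) F i).
Proof.
move=> F_comm F_nil.
suff [] : nilpotent (\sum_(i | P i) F i) /\
          forall j, P j -> GRing.comm (F j) (\sum_(i | P i) F i) by [].
apply: (big_rec (fun s => nilpotent s /\ forall j, P j -> GRing.comm (F j) s)).
  by split=> [|j _]; [exists 1%N; rewrite expr1 | exact: commr0].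
move=> i s Pi [s_nil s_comm]; split=> [|j Pj].
  exact: nilpotentD (s_comm i Pi) (F_nil i Pi) s_nil.
by apply: commrD; [exact: F_comm | exact: s_comm].
Qed.

Lemma nilpotent_1subr_rinv a : nilpotent a -> exists b, (1 - a) * b = 1.
Proof.
move=> [m am]; exists (\sum_(i < m) a ^+ i).
by apply: oppr_inj; rewrite -mulNr opprB -subrX1 am sub0r.
Qed.

Variables (d : nat) (W : 'I_d -> T).
Hypothesis W_comm : forall i j, GRing.comm (W i) (W j).

Lemma comm_monomial (e e' : 'I_d -> nat) :
  GRing.comm (\prod_(k < d) W k ^+ e k) (\prod_(k < d) W k ^+ e' k).
Proof.
apply: commr_prod => k _; apply/commr_sym/commr_prod => j _.
exact/commrX/commr_sym/commrX.
Qed.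

Lemma nilpotent_monomial (e : 'I_d -> nat) k0 :
  nilpotent (W k0) -> (0 < e k0)%N -> nilpotent (\prod_(k < d) W k ^+ e k).
Proof.
move=> W_nil e_gt0; set F := fun k => W k ^+ e k.
have F_comm k s : GRing.comm (F k) (\prod_(j <- s) F j).
  by apply: commr_prod => j _; exact/commrX/commr_sym/commrX.
suff prod_nil s : k0 \in s -> nilpotent (\prod_(k <- s) F k).
  by apply: prod_nil; rewrite mem_index_enum.
elim: s => [//|k s IHs]; rewrite in_cons big_cons => /predU1P[<-|k0s].
  exact: nilpotentMl (F_comm _ _) (nilpotentX W_nil e_gt0).
exact: nilpotentMr (F_comm _ _) (IHs k0s).
Qed.

End Nilpotent.

Section NilpotentMatrix.
Variables (K : fieldType) (N : nat).
Implicit Types (a : K) (M : 'M[K]_N).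

Lemma commZmx a b (A B : 'M[K]_N) :
  GRing.comm A B -> GRing.comm (a *: A) (b *: B).
Proof.
by rewrite /GRing.comm -!mulmxE -!scalemxAl -!scalemxAr !scalerA mulrC => ->.
Qed.

Lemma nilpotentZmx a M : nilpotent M -> nilpotent (a *: M).
Proof.
rewrite -mul_scalar_mx mulmxE; apply: nilpotentMr.
by rewrite /GRing.comm -!mulmxE scalar_mxC.
Qed.

Lemma unitmx_scalar_addr_nilpotent a M : (0 < N)%N -> nilpotent M ->
  (a *: (1 : 'M[K]_N) + M \in unitmx) = (a != 0).
Proof.
move=> N_gt0 M_nil; have [->|a_neq0] := eqVneq a 0.
  rewrite scale0r add0r; apply/negP => M_unit; have [m Mm] := M_nil.
  have : M ^+ m \in unitmx.
    elim: m {Mm} => [|m IHm]; first by rewrite expr0 -idmxE unitmx1.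
    by rewrite exprS -mulmxE unitmx_mul M_unit.
  by rewrite Mm => /mxrank_unit; rewrite mxrank0 => N0; rewrite -N0 in N_gt0.
have [b Mb] := nilpotent_1subr_rinv (nilpotentZmx (- a^-1) M_nil).
have -> : a *: (1 : 'M[K]_N) + M = a *: (1 - (- a^-1) *: M).
  by rewrite scalerBr scalerA mulrN divff // scaleNr scale1r opprK.
by rewrite unitmxZ ?unitfE //=; have [] := mulmx1_unit Mb.
Qed.

Variables (d : nat) (W : 'I_d -> 'M[K]_N).
Hypotheses (W_comm : forall i j, GRing.comm (W i) (W j))
           (W_nil : forall i, nilpotent (W i)).

Lemma nilpotent_polymx_nonconst D (c : {ffun 'I_d -> 'I_D.+1} -> K) :
  nilpotent (\sum_(e | e != const_exp d D) c e *: \prod_(k < d) W k ^+ e k).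
Proof.
apply: nilpotent_sum => [e e' _ _|e e_nonconst].
  exact/commZmx/comm_monomial.
have [k ek_gt0] : exists k, (0 < e k)%N.
  apply/existsP; apply: contraR e_nonconst => /existsPn e0.
  apply/eqP/ffunP => k; apply: val_inj; rewrite ffunE /=.
  by apply/eqP; rewrite -leqn0 leqNgt e0.
exact/nilpotentZmx/(nilpotent_monomial W_comm (W_nil k) ek_gt0).
Qed.

End NilpotentMatrix.

Section Kronecker.
Variable R : comPzRingType.

Lemma kidxK m n : cancel (@kidx m n) (fun p => mxvec_index p.1 p.2).
Proof.
by move=> k; rewrite /kidx /mxvec_index -surjective_pairing enum_valK cast_ordKV.
Qed.

Lemma sum_kidx m n (F : 'I_m -> 'I_n -> R) :
  \sum_(k < m * n) F (kidx k).1 (kidx k).2 = \sum_i \sum_j F i j.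
Proof.
rewrite pair_big (reindex (fun p : 'I_m * 'I_n => mxvec_index p.1 p.2)) /=.
  by apply: eq_bigr => p _; rewrite kidx_mxvec_index.
exists (@kidx m n) => [p _|k _]; last exact: kidxK.
by rewrite kidx_mxvec_index -surjective_pairing.
Qed.

Lemma mulmx_kron m1 n1 p1 m2 n2 p2 (A : 'M[R]_(m1, n1)) (B : 'M[R]_(m2, n2))
    (C : 'M[R]_(n1, p1)) (D : 'M[R]_(n2, p2)) :
  kron A B *m kron C D = kron (A *m C) (B *m D).
Proof.
apply/matrixP => i j; rewrite !mxE.
under eq_bigr do rewrite !mxE mulrACA.
rewrite (sum_kidx (fun a b => A (kidx i).1 a * C a (kidx j).1 *
                              (B (kidx i).2 b * D b (kidx j).2))).
by rewrite big_distrl; apply: eq_bigr => a _; rewrite big_distrr.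
Qed.

Lemma kron1 m n : kron (1%:M : 'M[R]_m) (1%:M : 'M[R]_n) = 1%:M.
Proof.
apply/matrixP => i j; rewrite !mxE -natrM mulnb -xpair_eqE -!surjective_pairing.
by rewrite (can_eq (@kidxK m n)).
Qed.

Lemma kron0l m1 n1 m2 n2 (B : 'M[R]_(m2, n2)) : kron (0 : 'M[R]_(m1, n1)) B = 0.
Proof. by apply/matrixP => i j; rewrite !mxE mul0r. Qed.

Lemma kron0r m1 n1 m2 n2 (A : 'M[R]_(m1, n1)) : kron A (0 : 'M[R]_(m2, n2)) = 0.
Proof. by apply/matrixP => i j; rewrite !mxE mulr0. Qed.

Lemma expr_kron m n (A : 'M[R]_m) (B : 'M[R]_n) k :
  kron A B ^+ k = kron (A ^+ k) (B ^+ k).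
Proof.
elim: k => [|k IHk]; first by rewrite !expr0 -!idmxE kron1.
by rewrite !exprS IHk -!mulmxE mulmx_kron.
Qed.

End Kronecker.

Lemma size_deriv_leq (R : nzRingType) (p : {poly R}) : (size p^`() <= size p)%N.
Proof. exact: leq_trans (size_poly _ _) (leq_pred _). Qed.

Section LagrangeBasis.
Variables (R : fieldType) (n : nat) (x : nat -> R).

Lemma size_lagr i : (i < n.+1)%N -> (size (lagr n x i) <= n.+1)%N.
Proof.
move=> i_lt; rewrite /lagr big_split /= -rmorph_prod mulrC mul_polyC.
apply: leq_trans (size_scale_leq _ _) _.
rewrite (eq_bigl (mem (predC1 (Ordinal i_lt)))) // -big_enum.
by rewrite size_prod_XsubC -cardE cardC1 card_ord.
Qed.

Hypothesis x_inj : {in [pred i | (i <= n)%N] &, injective x}.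

Lemma lagr_node i j : (i < n.+1)%N -> (j < n.+1)%N ->
  (lagr n x i).[x j] = (i == j)%:R.
Proof.
move=> i_lt j_lt; rewrite /lagr horner_prod.
under eq_bigr do rewrite hornerM hornerXsubC hornerC.
have [<-|i_neq_j] := eqVneq i j.
  apply: big1 => m m_neq_i; apply: divff; rewrite subr_eq0.
  by apply: contra m_neq_i => /eqP/x_inj ->; rewrite ?inE // -ltnS.
rewrite (bigD1 (Ordinal j_lt)) 1?eq_sym //=.
by rewrite subrr !mul0r.
Qed.

Lemma lagrange_interpolation (q : {poly R}) : (size q <= n.+1)%N ->
  q = \sum_(i < n.+1) q.[x i] *: lagr n x i.
Proof.
move=> q_small; apply/eqP; rewrite -subr_eq0; apply/eqP.
apply: (@roots_geq_poly_eq0 _ _ [seq x i | i <- iota 0 n.+1]).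
- apply/allP => y /mapP[i]; rewrite mem_iota => /andP[_ i_lt] ->.
  rewrite /root hornerD hornerN horner_sum subr_eq0 (bigD1 (Ordinal i_lt)) //=.
  rewrite big1 => [|[j j_lt] j_neq_i].
    by rewrite hornerZ (lagr_node i_lt i_lt) eqxx mulr1 addr0.
  by rewrite hornerZ (lagr_node j_lt i_lt) (negbTE (j_neq_i : j != i)) mulr0.
- rewrite map_inj_in_uniq ?iota_uniq // => i j; rewrite !mem_iota /=.
  by move=> i_lt j_lt; exact: x_inj.
rewrite size_map size_iota (leq_trans (size_polyD _ _)) //.
rewrite size_polyN geq_max q_small.
rewrite (leq_trans (size_sum _ _ _)) //; apply/bigmax_leqP => i _.
exact: leq_trans (size_scale_leq _ _) (size_lagr (ltn_ord i)).
Qed.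

Definition evalcol (q : {poly R}) : 'cV[R]_n.+1 := \col_j q.[x j].

Lemma evalcol_lagr (j : 'I_n.+1) : evalcol (lagr n x j) = delta_mx j 0.
Proof.
apply/matrixP => i k; rewrite !mxE (lagr_node (ltn_ord j) (ltn_ord i)).
by rewrite [k]ord1 eqxx andbT eq_sym.
Qed.

Lemma mul_Zhat_evalcol (q : {poly R}) : (size q <= n.+1)%N ->
  Zhat n x *m evalcol q = evalcol q^`().
Proof.
move=> q_small; apply/matrixP => j k.
rewrite !mxE [in RHS](lagrange_interpolation q_small).
rewrite raddf_sum horner_sum; apply: eq_bigr => i _.
by rewrite !mxE /= derivZ hornerZ mulrC.
Qed.

Lemma mul_ZhatX_evalcol k (q : {poly R}) : (size q <= n.+1)%N ->
  Zhat n x ^+ k *m evalcol q = evalcol q^`(k).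
Proof.
elim: k q => [|k IHk] q q_small; first by rewrite expr0 -idmxE mul1mx derivn0.
rewrite exprSr -mulmxE -mulmxA mul_Zhat_evalcol // IHk ?derivSn //.
exact: leq_trans (size_deriv_leq q) q_small.
Qed.

Lemma Zhat_nilpotent : Zhat n x ^+ n.+1 = 0.
Proof.
apply/matrixP => i j.
have -> : (Zhat n x ^+ n.+1) i j = col j (Zhat n x ^+ n.+1) i 0 by rewrite mxE.
rewrite colE -evalcol_lagr mul_ZhatX_evalcol ?size_lagr //.
by rewrite derivn_poly0 ?size_lagr // !mxE horner0.
Qed.

End LagrangeBasis.

Lemma incn_inj_le {disp : Order.disp_t} (T : porderType disp) m (y : nat -> T) :
    (forall j, (j < m)%N -> (y j < y j.+1)%O) ->
  {in [pred i | (i <= m)%N] &, injective y}.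
Proof.
move=> y_incr; apply/inc_inj_in/Order.NatMonotonyTheory.incn_inP => [i j _|i _].
  by rewrite !inE => j_le k /andP[_ k_lt]; exact: leq_trans (ltnW k_lt) j_le.
by rewrite inE; apply: y_incr.
Qed.

Lemma Ndim_gt0 n d : (0 < Ndim n d)%N.
Proof. by elim: d => //= d IHd; rewrite muln_gt0 IHd. Qed.

Section CoordinateOperators.
Variables (R : fieldType) (n : nat -> nat) (x : nat -> nat -> R).

Lemma Wmat_comm d a b : (a < d)%N -> (b < d)%N ->
  GRing.comm (Wmat n x d a) (Wmat n x d b).
Proof.
elim: d a b => [//|d IHd] a b /=; rewrite !ltnS => a_le b_le.
rewrite /GRing.comm -!mulmxE.
case: eqP => [_|/eqP a_neq]; case: eqP => [_|/eqP b_neq];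
  rewrite !mulmx_kron ?mul1mx ?mulmx1 //.
by rewrite !mulmxE IHd // ltn_neqAle ?a_neq ?b_neq.
Qed.

Lemma nilpotent_Wmat d a : (a < d)%N ->
  nilpotent (Zhat (n a) (x a)) -> nilpotent (Wmat n x d a).
Proof.
move=> a_lt [m Zm]; exists m.
elim: d a_lt => [//|d IHd]; rewrite ltnS /= => a_le.
case: eqP => [<-|/eqP a_neq]; first by rewrite expr_kron Zm kron0r.
by rewrite expr_kron IHd ?kron0l // ltn_neqAle a_neq.
Qed.

Lemma polyW_const_addr d D (c : {ffun 'I_d -> 'I_D.+1} -> R) :
  polyW n x c = c (const_exp d D) *: (1 : 'M[R]_(Ndim n d)) +
    \sum_(e | e != const_exp d D) c e *: \prod_(k < d) Wmat n x d k ^+ e k.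
Proof.
rewrite /polyW (bigD1 (const_exp d D)) //=; congr (_ *: _ + _).
by apply: big1 => k _; rewrite ffunE expr0.
Qed.

End CoordinateOperators.

Theorem mainTheorem10 (R : realFieldType) (d : nat) (n : nat -> nat)
  (x : nat -> nat -> R)
  (hn : forall k, (k < d)%N -> (1 <= n k)%N)
  (hx : forall k j, (k < d)%N -> (j < n k)%N -> x k j < x k j.+1)
  (D : nat) (c : {ffun 'I_d -> 'I_D.+1} -> R) :
  (\rank (polyW n x c) = Ndim n d) <-> c (const_exp d D) != 0.
Proof.
have W_comm (i j : 'I_d) : GRing.comm (Wmat n x d i) (Wmat n x d j).
  exact: Wmat_comm.
have W_nil (i : 'I_d) : nilpotent (Wmat n x d i).
  apply: nilpotent_Wmat => //; exists (n i).+1.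
  by apply/Zhat_nilpotent/incn_inj_le => j; apply: hx.
have := unitmx_scalar_addr_nilpotent (c (const_exp d D)) (Ndim_gt0 n d)
          (nilpotent_polymx_nonconst W_comm W_nil c).
by rewrite -polyW_const_addr -row_free_unit => <-; exact: (rwP eqP).
Qed.
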